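(* Let $k,m,t$ be positive integers with $m+t\le k$ and $q$ a prime power. Let $B$ be the bipartite graph with left vertices the $t$-dimensional subspaces $V$ of $\mathbb{F}_q^k$, right vertices the $(m+t)$-dimensional subspaces $X$ of $\mathbb{F}_q^k$, and $V$ adjacent to $X$ iff $V\subseteq X$. For every $(m+t)$-dimensional subspace $X$ fix a bijection $V\mapsto T_{V,X}$ from the $t$-dimensional subspaces of $X$ onto the $m$-dimensional subspaces of $X$ such that $T_{V,X}\oplus V=X$ for every such $V$. For an $m$-dimensional subspace $T$ of $\mathbb{F}_q^k$ let $\mathcal{C}_T=\{\{V,X\}\in E(B): T_{V,X}=T\}$. Then $\mathcal{C}_T$ is an induced matching of $B$ of size $\binom{k-m}{t}_q$.
   Context: $\binom{a}{b}_q$ denotes the Gaussian binomial coefficient (number of $b$-dimensional subspaces of $\mathbb{F}_q^a$). An induced matching of a bipartite graph $B$ is a set $\mathcal{C}\subseteq E(B)$ such that for any two distinct $\{k_1,f_1\},\{k_2,f_2\}\in\mathcal{C}$: $k_1\ne k_2$, $f_1\ne f_2$, and $\{k_1,f_2\},\{k_2,f_1\}\notin E(B)$. *)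

From HB Require Import structures.
From mathcomp Require Import all_boot all_algebra all_field.
Set Implicit Arguments. Unset Strict Implicit. Unset Printing Implicit Defensive.
Import GRing.Theory.
Local Open Scope ring_scope.

(* Over a finite field, the type of subspaces {vspace vT} is finite:
   equip it with a finType structure (via its canonical matrix representation). *)
Section FinVspace.
Import VectorInternalTheory.
Variables (F : finFieldType) (vT : vectType F).
HB.instance Definition _ := [Countable of {vspace vT} by <:].
HB.instance Definition _ := [Finite of {vspace vT} by <:].
End FinVspace.

Definition gauss_binom (F : finFieldType) (a b : nat) : nat :=
  #|[set U : {vspace 'rV[F]_a} | \dim U == b]|.

Definition induced_matching (S1 S2 : finType) (E C : {set S1 * S2}) : Prop :=
  C \subset E /\
  forall e1 e2, e1 \in C -> e2 \in C -> e1 != e2 ->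
    [/\ e1.1 != e2.1, e1.2 != e2.2, (e1.1, e2.2) \notin E & (e2.1, e1.2) \notin E].

Definition incl_edges (F : finFieldType) (k t m : nat)
  : {set {vspace 'rV[F]_k} * {vspace 'rV[F]_k}} :=
  [set p | [&& \dim p.1 == t, \dim p.2 == (m + t)%N & (p.1 <= p.2)%VS]].

From HB Require Import structures.
From mathcomp Require Import all_boot all_algebra all_field.
Set Implicit Arguments. Unset Strict Implicit. Unset Printing Implicit Defensive.
Import GRing.Theory.
Local Open Scope ring_scope.

(* If (V, X) is in C_T then X = T (+) V, so X is determined by V and, by
   injectivity of V |-> T_{V,X}, V by X.  Hence distinct edges of C_T have
   distinct ends, and V1 <= X2 would force X1 = T + V1 <= X2, i.e. X1 = X2 by
   dimension.  By surjectivity the right ends of C_T are exactly the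
   (m+t)-dimensional subspaces containing T, which correspond to the
   t-dimensional subspaces of F^k / T, a space of dimension k - m. *)

Section ImageCorrespondence.
Variables (F : fieldType) (aT rT : vectType F) (f : 'Hom(aT, rT)).

Lemma dim_limg_supker X :
  (lker f <= X)%VS -> \dim (f @: X) = (\dim X - \dim (lker f))%N.
Proof. by move=> kfX; rewrite -(limg_ker_dim f X) (capv_idPr kfX) addKn. Qed.

Lemma lker_sub_lpreim W : (lker f <= f @^-1: W)%VS.
Proof. by rewrite -lpreim0 lpreimS ?sub0v. Qed.

Lemma dim_lpreim W :
  (W <= limg f)%VS -> \dim (f @^-1: W) = (\dim (lker f) + \dim W)%N.
Proof.
move=> fW; have := dim_limg_supker (lker_sub_lpreim W).
rewrite lpreimK // => ->.
by rewrite subnKC ?dimvS ?lker_sub_lpreim.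
Qed.

Lemma limgK X : (lker f <= X)%VS -> (f @^-1: (f @: X))%VS = X.
Proof.
move=> kfX; apply/eqP; rewrite eq_sym eqEdim dim_lpreim ?limgS ?subvf //.
rewrite dim_limg_supker // subnKC ?dimvS // andbT.
by apply/subvP=> x Xx; rewrite -memv_preim memv_img.
Qed.

End ImageCorrespondence.

Lemma card_supker_vspace (F : finFieldType) (aT rT : vectType F)
    (f : 'Hom(aT, rT)) d :
  #|[set X : {vspace aT} | (lker f <= X)%VS && (\dim X == \dim (lker f) + d)%N]|
  = #|[set W : {vspace rT} | (W <= limg f)%VS && (\dim W == d)]|.
Proof.
rewrite -(card_in_imset (f := lfun_img f)); last first.
  move=> X1 X2; rewrite !inE => /andP[kf1 _] /andP[kf2 _] eqfX.
  by rewrite -(limgK kf1) eqfX limgK.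
congr #|pred_of_set _|; apply/setP=> W; rewrite inE.
apply/imsetP/andP=> [[X] | [fW /eqP dimW]].
  rewrite inE => /andP[kfX /eqP dimX] ->.
  by rewrite limgS ?subvf // dim_limg_supker // dimX addKn.
exists (f @^-1: W)%VS; last by rewrite lpreimK.
by rewrite inE lker_sub_lpreim dim_lpreim // dimW eqxx.
Qed.

Section CoordMap.
Variables (F : fieldType) (vT : vectType F) (S : {vspace vT}).

Definition coordv_fun (v : vT) : 'rV[F]_(\dim S) := \row_i coord (vbasis S) i v.

Fact coordv_fun_is_linear : linear coordv_fun.
Proof. by move=> a u v; apply/rowP=> i; rewrite !mxE linearP. Qed.
HB.instance Definition _ := GRing.isSemilinear.Build F vT 'rV[F]_(\dim S) _
  coordv_fun (GRing.semilinear_linear coordv_fun_is_linear).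

Definition coordv : 'Hom(vT, 'rV[F]_(\dim S)) := linfun coordv_fun.

Definition vecofv (r : 'rV[F]_(\dim S)) : vT := \sum_i r 0 i *: (vbasis S)`_i.

Lemma memv_vecofv r : vecofv r \in S.
Proof. by apply: rpred_sum => i _; rewrite rpredZ ?vbasis_mem ?memt_nth. Qed.

Lemma vecofvK : cancel vecofv coordv.
Proof.
move=> r; apply/rowP=> i; rewrite lfunE !mxE.
by rewrite coord_sum_free ?(basis_free (vbasisP S)).
Qed.

End CoordMap.

Section QuotientMap.
Variables (F : fieldType) (vT : vectType F) (T : {vspace vT}).

Definition quotv : 'Hom(vT, 'rV[F]_(\dim T^C)) :=
  (coordv (T^C)%VS \o (\1 - projv T))%VF.

Lemma quotvE v : quotv v = coordv (T^C)%VS (v - projv T v).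
Proof. by rewrite comp_lfunE add_lfunE opp_lfunE id_lfunE. Qed.

Lemma limg_quotv : limg quotv = fullv.
Proof.
apply/eqP; rewrite eqEsubv subvf; apply/subvP=> r _.
have /eqP projr0 : projv T (vecofv r) == 0.
  by rewrite -memv_ker lker_proj memv_vecofv.
by rewrite -[r]vecofvK -[vecofv r]subr0 -projr0 -quotvE memv_img ?memvf.
Qed.

Lemma lker_quotv : lker quotv = T.
Proof.
apply/eqP; rewrite eq_sym eqEdim; apply/andP; split.
  apply/subvP=> v Tv; rewrite memv_ker quotvE projv_id // subrr.
  by rewrite linear0.
have := limg_ker_dim quotv fullv; rewrite capfv limg_quotv.
rewrite [in X in (_ + X)%N]dimvf dim_matrix mul1r => dimE.
by rewrite -(leq_add2r (\dim T^C)) dimE dimv_compl subnKC ?dimvS ?subvf.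
Qed.

End QuotientMap.

Lemma card_supvspace (F : finFieldType) (vT : vectType F) (T : {vspace vT}) d :
  #|[set X : {vspace vT} | (T <= X)%VS && (\dim X == \dim T + d)%N]|
  = gauss_binom F (\dim T^C) d.
Proof.
have := card_supker_vspace (quotv T) d; rewrite lker_quotv limg_quotv => ->.
by congr #|pred_of_set _|; apply/setP=> W; rewrite !inE subvf.
Qed.

Section MatchingOfComplement.
Variables (F : finFieldType) (k m t : nat).
Variable TT : {vspace 'rV[F]_k} -> {vspace 'rV[F]_k} -> {vspace 'rV[F]_k}.
Hypothesis hT_compl : forall X V,
  \dim X = (m + t)%N -> \dim V = t -> (V <= X)%VS ->
  [/\ (TT V X <= X)%VS, \dim (TT V X) = m,
      directv (TT V X + V) & (TT V X + V)%VS = X].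
Hypothesis hT_inj : forall X V1 V2, \dim X = (m + t)%N ->
  \dim V1 = t -> (V1 <= X)%VS -> \dim V2 = t -> (V2 <= X)%VS ->
  TT V1 X = TT V2 X -> V1 = V2.
Hypothesis hT_surj : forall X U,
  \dim X = (m + t)%N -> \dim U = m -> (U <= X)%VS ->
  exists V, [/\ \dim V = t, (V <= X)%VS & TT V X = U].
Variable T : {vspace 'rV[F]_k}.

Local Notation E := (incl_edges F k t m).
Local Notation C := [set p in E | TT p.1 p.2 == T].

Lemma mem_incl_edges V X :
  ((V, X) \in E) = [&& \dim V == t, \dim X == (m + t)%N & (V <= X)%VS].
Proof. by rewrite inE. Qed.

Lemma mem_matching V X :
  ((V, X) \in C) =
  [&& \dim V == t, \dim X == (m + t)%N, (V <= X)%VS & TT V X == T].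
Proof. by rewrite inE mem_incl_edges -!andbA. Qed.

Lemma matching_addv V X : (V, X) \in C -> X = (T + V)%VS.
Proof.
rewrite mem_matching => /and4P[/eqP dimV /eqP dimX VX /eqP <-].
by case: (hT_compl dimX dimV VX).
Qed.

Lemma matching_sup V X : (V, X) \in C -> (T <= X)%VS.
Proof. by move/matching_addv->; apply: addvSl. Qed.

Lemma matching_maximal V X Y :
  (V, X) \in C -> \dim Y = (m + t)%N -> (T <= Y)%VS -> (V <= Y)%VS -> X = Y.
Proof.
move=> CVX dimY TY VY.
have XY : (X <= Y)%VS by rewrite (matching_addv CVX) subv_add TY.
move: CVX; rewrite mem_matching => /and4P[_ /eqP dimX _ _].
by apply/eqP; rewrite eqEdim XY dimX dimY /=.
Qed.

Lemma matching_fst_inj : {in C &, injective fst}.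
Proof.
by move=> [V1 X1] [V2 X2] /matching_addv-> /matching_addv-> /= ->.
Qed.

Lemma matching_snd_inj : {in C &, injective snd}.
Proof.
move=> [V1 X] [V2 X2] + + /= eqX; rewrite -{X2}eqX !mem_matching.
move=> /and4P[/eqP dimV1 /eqP dimX V1X /eqP TV1].
move=> /and4P[/eqP dimV2 _ V2X /eqP TV2].
by rewrite (hT_inj dimX dimV1 V1X dimV2 V2X) // TV1 TV2.
Qed.

Lemma induced_matching_complement : induced_matching E C.
Proof.
split=> [|[V1 X1] [V2 X2] C1 C2 neq12 /=].
  by apply/subsetP=> p; rewrite inE => /andP[].
have nX : X1 != X2.
  by apply: contra neq12 => /eqP eqX; rewrite (matching_snd_inj C1 C2 eqX).
have nV : V1 != V2.
  by apply: contra neq12 => /eqP eqV; rewrite (matching_fst_inj C1 C2 eqV).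
have := C1; have := C2; rewrite !mem_matching !mem_incl_edges.
move=> /and4P[-> /eqP dimX2 _ _] /and4P[-> /eqP dimX1 _ _].
rewrite dimX1 dimX2 eqxx /=; split=> //; apply: contraNN nX => VX; apply/eqP.
  exact: matching_maximal C1 dimX2 (matching_sup C2) VX.
exact/esym/(matching_maximal C2 dimX1 (matching_sup C1) VX).
Qed.

Hypothesis dimT : \dim T = m.

Lemma matching_snd_imset :
  snd @: C = [set X | (T <= X)%VS && (\dim X == \dim T + t)%N].
Proof.
apply/setP=> X; rewrite inE dimT.
apply/imsetP/andP=> [[[V Y] CVY ->] | [TX /eqP dimX]].
  by move: (CVY); rewrite mem_matching (matching_sup CVY) => /and4P[].
have [V [dimV VX TVX]] := hT_surj dimX dimT TX.
by exists (V, X); rewrite // mem_matching dimV dimX VX TVX !eqxx.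
Qed.

Lemma card_matching : #|C| = gauss_binom F (\dim T^C) t.
Proof.
by rewrite -(card_in_imset matching_snd_inj) matching_snd_imset card_supvspace.
Qed.

End MatchingOfComplement.

Theorem lemma6 (F : finFieldType) (k m t : nat)
  (k_gt0 : (0 < k)%N) (m_gt0 : (0 < m)%N) (t_gt0 : (0 < t)%N)
  (mtk : (m + t <= k)%N)
  (TT : {vspace 'rV[F]_k} -> {vspace 'rV[F]_k} -> {vspace 'rV[F]_k})
  (* for each (m+t)-dim X, V |-> TT V X maps the t-dim subspaces of X to
     m-dim subspaces of X with TT V X (+) V = X ... *)
  (hT_compl : forall X V, \dim X = (m + t)%N -> \dim V = t -> (V <= X)%VS ->
      [/\ (TT V X <= X)%VS, \dim (TT V X) = m,
          directv (TT V X + V) & (TT V X + V)%VS = X])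
  (* ... injectively ... *)
  (hT_inj : forall X V1 V2, \dim X = (m + t)%N ->
      \dim V1 = t -> (V1 <= X)%VS -> \dim V2 = t -> (V2 <= X)%VS ->
      TT V1 X = TT V2 X -> V1 = V2)
  (* ... and onto the m-dim subspaces of X. *)
  (hT_surj : forall X U, \dim X = (m + t)%N -> \dim U = m -> (U <= X)%VS ->
      exists V, [/\ \dim V = t, (V <= X)%VS & TT V X = U])
  (T : {vspace 'rV[F]_k}) (dimT : \dim T = m) :
  let C := [set p in incl_edges F k t m | TT p.1 p.2 == T] in
  induced_matching (incl_edges F k t m) C /\ #|C| = gauss_binom F (k - m) t.
Proof.
move=> C; split; first exact: induced_matching_complement hT_compl hT_inj T.
rewrite (card_matching hT_compl hT_inj hT_surj dimT).
by rewrite dimv_compl dimvf dim_matrix mul1r dimT.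
Qed.
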